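(* For $n=2$ threads, in the limit $m\to\infty$, the probability $\Pr[A]$ that the canonical race does not manifest satisfies: under Sequential Consistency, $\Pr[A]=1/6$; under Weak Ordering, $\Pr[A]=7/54\approx 0.1296$; under Total Store Order, $0.1315<\Pr[A]<0.1369$ (more precisely $58/441<\Pr[A]<58/441+1/189$).
   Context: Fix $m\ge 1$. A random program is a sequence $x_1,\dots,x_{m+2}$ of memory operations, each with a type in $\{\mathrm{LD},\mathrm{ST}\}$: $x_1,\dots,x_m$ have i.i.d. types, each $\mathrm{ST}$ with probability $1/2$ and $\mathrm{LD}$ with probability $1/2$; $x_{m+1}$ (the critical load) has type $\mathrm{LD}$ and $x_{m+2}$ (the critical store) has type $\mathrm{ST}$. The initial order is $S_0=(x_1,\dots,x_{m+2})$. A memory model is specified by the set of ordered type pairs $(\tau_1,\tau_2)$ for which an instruction of type $\tau_2$ may be moved ahead of an immediately preceding instruction of type $\tau_1$: Sequential Consistency (SC) allows no pair; Total Store Order (TSO) allows only the pair $(\mathrm{ST},\mathrm{LD})$ (a load may move ahead of a preceding store); Weak Ordering (WO) allows all four pairs. The settling process runs rounds $r=1,\dots,m+2$. Before round $r$, the current order $S_{r-1}$ consists of $x_1,\dots,x_{r-1}$ in some order in positions $1,\dots,r-1$, followed by $x_r,\dots,x_{m+2}$ in positions $r,\dots,m+2$. In round $r$, instruction $x_r$ (starting at position $r$) repeatedly attempts to swap with the instruction immediately preceding it in the current order: the attempt fails automatically if the pair (type of the preceding instruction, type of $x_r$) is not allowed by the memory model, or if $x_r$ is the critical store and the preceding instruction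 is the critical load; otherwise the attempt succeeds independently with probability $1/2$. The round ends when an attempt fails or $x_r$ reaches position $1$; the resulting order is $S_r$. The final order is $S_{m+2}$. Combined model with $n$ threads: generate one random program, then apply the settling process independently to $n$ copies of it (threads $T_1,\dots,T_n$), all under the same memory model. For thread $k$, let $\gamma_k$ be the number of instructions strictly between the critical load and the critical store in its final order, and $\Gamma_k=\gamma_k+2$. Let $s_1,\dots,s_n$ be i.i.d. shifts, independent of everything else, with $\Pr[s_k=j]=2^{-(j+1)}$ for $j\ge0$. $A$ is the event that the closed intervals $[s_k,s_k+\Gamma_k]$, $k=1,\dots,n$, are pairwise disjoint (the race does not manifest). *)

From Stdlib Require Import Reals List Arith Bool.
Import ListNotations.
Open Scope R_scope.

(* Instruction types: true = ST, false = LD. *)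
(* A memory model: [model p x] = may an instruction of type x move ahead of an
   immediately preceding instruction of type p. *)
Definition memory_model := bool -> bool -> bool.
Definition SC  : memory_model := fun _ _ => false.
Definition TSO : memory_model := fun p x => p && negb x.
Definition WO  : memory_model := fun _ _ => true.

Definition dist (A : Type) := list (A * R).

Definition sumR (l : list R) : R := fold_right Rplus 0 l.

(* Instructions are indexed 0 .. m+1 (x_{i+1} has index i); index m is the
   critical load, index m+1 the critical store. [prog] lists the types of
   x_1..x_m. *)
Definition typ (prog : list bool) (m i : nat) : bool :=
  if Nat.ltb i m then nth i prog false
  else if Nat.eqb i m then false else true.

Definition can_swap (model : memory_model) (prog : list bool) (m y x : nat) : bool :=
  model (typ prog m y) (typ prog m x) && negb (Nat.eqb x (S m) && Nat.eqb y m).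

(* One round: instruction x sits right after the (already placed) prefix,
   given reversed as [pre_rev]; [after] are the instructions x has already
   passed. *)
Fixpoint sink (model : memory_model) (prog : list bool) (m x : nat)
    (pre_rev after : list nat) : dist (list nat) :=
  match pre_rev with
  | [] => [(x :: after, 1)]
  | y :: ys =>
      if can_swap model prog m y x then
        (rev pre_rev ++ x :: after, /2)
          :: map (fun '(o, q) => (o, /2 * q)) (sink model prog m x ys (y :: after))
      else [(rev pre_rev ++ x :: after, 1)]
  end.

Definition round (model : memory_model) (prog : list bool) (m : nat)
    (d : dist (list nat)) (x : nat) : dist (list nat) :=
  flat_map (fun '(o, p) =>
              map (fun '(o', q) => (o', p * q)) (sink model prog m x (rev o) []))
           d.

Definition settle (model : memory_model) (prog : list bool) (m : nat) : dist (list nat) :=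
  fold_left (round model prog m) (seq 0 (m + 2)) [([], 1)].

Fixpoint pos (x : nat) (l : list nat) : nat :=
  match l with
  | [] => 0
  | y :: ys => if Nat.eqb y x then 0 else S (pos x ys)
  end.

(* gamma = number of instructions strictly between critical load and store *)
Definition gamma (m : nat) (o : list nat) : nat := pos (S m) o - pos m o - 1.
Definition Gamma (m : nat) (o : list nat) : nat := (gamma m o + 2)%nat.

(* all programs (type sequences of x_1..x_m), each with probability 2^-m *)
Fixpoint all_progs (m : nat) : list (list bool) :=
  match m with
  | O => [[]]
  | S k => flat_map (fun p => [true :: p; false :: p]) (all_progs k)
  end.

Definition shift_prob (j : nat) : R := (/2) ^ (S j).

Definition disjointb (s1 G1 s2 G2 : nat) : bool :=
  Nat.ltb (s1 + G1) s2 || Nat.ltb (s2 + G2) s1.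

Definition indic (b : bool) : R := if b then 1 else 0.

(* Pr[A and s_1 < N and s_2 < N] for n = 2 threads. *)
Definition PrA_trunc (model : memory_model) (m N : nat) : R :=
  sumR (map (fun prog =>
    (/2) ^ m *
    sumR (map (fun '(o1, p1) =>
      sumR (map (fun '(o2, p2) =>
        p1 * p2 *
        sumR (map (fun s1 =>
          sumR (map (fun s2 =>
            shift_prob s1 * shift_prob s2 *
            indic (disjointb s1 (Gamma m o1) s2 (Gamma m o2)))
          (seq 0 N)))
        (seq 0 N)))
      (settle model prog m)))
    (settle model prog m)))
  (all_progs m)).

(* [PrA model m p]: Pr[A] = p, i.e. the truncations converge to p
   (countable additivity over the shift values). *)
Definition PrA (model : memory_model) (m : nat) (p : R) : Prop :=
  Un_cv (fun N => PrA_trunc model m N) p.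

From Pilot Require Import Defs.
From Stdlib Require Import Reals Lra Lia List Arith Bool.
Import ListNotations.
Open Scope R_scope.

(* Given Γ_1 = a and Γ_2 = b, independent geometric shifts avoid the race with
   probability (2^-a + 2^-b)/3, so Pr[A] = (2/3) E[2^-Γ] for a single thread.
   In each round an instruction passes a truncated geometric number of its
   movable predecessors, so E[2^-Γ] is a nested finite sum over the rounds.
   Under SC nothing moves and Γ = 2.  Under WO every instruction can pass all
   earlier ones, so only the critical pair matters, and E[2^-Γ] -> 7/36.  Under
   TSO only loads move, and only past the stores at the end of the current
   order; averaging over the program gives E[2^-Γ] = h_m(0) for a linear
   recursion h_{m+1} = Q h_m whose differences contract by 3/8.  This squeezes
   lim h_m(0) between h_3(0) - (3/8)^3/20 and h_3(0) = 13/64. *)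


(** * Finite sums, expectations and limits *)

Lemma sumR_app l1 l2 : sumR (l1 ++ l2) = sumR l1 + sumR l2.
Proof. induction l1 as [|x l1 IH]; simpl; [|rewrite IH]; lra. Qed.

Lemma sumR_map_ext_in {A} (f g : A -> R) l :
  (forall x, In x l -> f x = g x) -> sumR (map f l) = sumR (map g l).
Proof. intro H; f_equal; apply map_ext_in; auto. Qed.

Lemma sumR_map_plus {A} (f g : A -> R) l :
  sumR (map (fun x => f x + g x) l) = sumR (map f l) + sumR (map g l).
Proof. induction l as [|x l IH]; simpl; [|rewrite IH]; lra. Qed.

Lemma sumR_map_scale {A} (c : R) (f : A -> R) l :
  sumR (map (fun x => c * f x) l) = c * sumR (map f l).
Proof. induction l as [|x l IH]; simpl; [|rewrite IH]; lra. Qed.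

Lemma sumR_map_const {A} (c : R) (l : list A) :
  sumR (map (fun _ => c) l) = INR (length l) * c.
Proof. induction l as [|x l IH]; simpl length; [simpl; lra|]. rewrite S_INR. simpl. rewrite IH. lra. Qed.

Lemma sumR_flat_map {A B} (f : B -> R) (g : A -> list B) l :
  sumR (map f (flat_map g l)) = sumR (map (fun x => sumR (map f (g x))) l).
Proof. induction l as [|x l IH]; simpl; [|rewrite map_app, sumR_app, IH]; auto. Qed.

Lemma sumR_swap (f : nat -> nat -> R) l1 l2 :
  sumR (map (fun i => sumR (map (fun j => f i j) l2)) l1) =
  sumR (map (fun j => sumR (map (fun i => f i j) l1)) l2).
Proof.
  induction l1 as [|a l1 IH]; simpl.
  - rewrite sumR_map_const. lra.
  - rewrite IH, <- sumR_map_plus. reflexivity.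
Qed.

Lemma sumR_seq_S (f : nat -> R) n :
  sumR (map f (seq 0 (S n))) = sumR (map f (seq 0 n)) + f n.
Proof. rewrite seq_S, map_app, sumR_app. simpl. lra. Qed.

Lemma sumR_seq_shift (f : nat -> R) n :
  sumR (map f (seq 0 (S n))) = f 0%nat + sumR (map (fun j => f (S j)) (seq 0 n)).
Proof. simpl. rewrite <- seq_shift, map_map. reflexivity. Qed.

Lemma sum_geom_half n : sumR (map (fun j => (/2)^(S j)) (seq 0 n)) = 1 - (/2)^n.
Proof. induction n as [|n IH]; [simpl; lra|]. rewrite sumR_seq_S, IH. simpl. lra. Qed.

Definition expect {A} (d : Defs.dist A) (f : A -> R) : R :=
  sumR (map (fun '(o, p) => p * f o) d).

Lemma expect_ext {A} (d : Defs.dist A) f g : (forall o, f o = g o) -> expect d f = expect d g.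
Proof. intro H; unfold expect; f_equal; apply map_ext; intros [o p]; rewrite H; auto. Qed.

Lemma expect_app {A} (d1 d2 : Defs.dist A) f : expect (d1 ++ d2) f = expect d1 f + expect d2 f.
Proof. unfold expect; rewrite map_app, sumR_app; auto. Qed.

Lemma expect_scale_weights {A} (d : Defs.dist A) c f :
  expect (map (fun '(o, q) => (o, c * q)) d) f = c * expect d f.
Proof. induction d as [|[o q] d IH]; unfold expect in *; simpl; [|rewrite IH]; lra. Qed.

Lemma expect_plus {A} (d : Defs.dist A) f g :
  expect d (fun o => f o + g o) = expect d f + expect d g.
Proof. induction d as [|[o q] d IH]; unfold expect in *; simpl; [|rewrite IH]; lra. Qed.

Lemma expect_scale {A} (d : Defs.dist A) c f : expect d (fun o => c * f o) = c * expect d f.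
Proof. induction d as [|[o q] d IH]; unfold expect in *; simpl; [|rewrite IH]; lra. Qed.

Lemma expect_const {A} (d : Defs.dist A) c : expect d (fun _ => 1) = 1 -> expect d (fun _ => c) = c.
Proof.
  intro Hd. rewrite (expect_ext _ _ (fun _ => c * 1)) by (intro; ring).
  rewrite expect_scale, Hd. ring.
Qed.

Lemma expect_pair_avg {A} (d : Defs.dist A) f :
  expect d (fun _ => 1) = 1 ->
  expect d (fun o1 => expect d (fun o2 => (f o1 + f o2) / 3)) = 2/3 * expect d f.
Proof.
  intro Hd.
  rewrite (expect_ext _ _ (fun o1 => /3 * f o1 + /3 * expect d f)).
  2:{ intro o1. rewrite (expect_ext _ _ (fun o2 => /3 * f o1 + /3 * f o2)) by (intro; field).
      rewrite expect_plus, expect_const, expect_scale; auto. }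
  rewrite expect_plus, expect_const, expect_scale; auto. field.
Qed.

Lemma Un_cv_const c : Un_cv (fun _ => c) c.
Proof. intros eps He. exists 0%nat. intros. unfold Rdist. rewrite Rminus_diag, Rabs_R0. auto. Qed.

Lemma Un_cv_scale (u : nat -> R) l c : Un_cv u l -> Un_cv (fun N => c * u N) (c * l).
Proof. intro H. apply CV_mult; [apply Un_cv_const|auto]. Qed.

Lemma Un_cv_pow x : Rabs x < 1 -> Un_cv (fun n => x ^ n) 0.
Proof.
  intros Hx eps He. destruct (pow_lt_1_zero x Hx eps He) as [N HN].
  exists N. intros n Hn. unfold Rdist. rewrite Rminus_0_r. auto.
Qed.

Lemma Un_cv_sumR_map {A} (f : nat -> A -> R) (h : A -> R) l :
  (forall x, Un_cv (fun N => f N x) (h x)) -> Un_cv (fun N => sumR (map (f N) l)) (sumR (map h l)).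
Proof. intro H. induction l as [|a l IH]; simpl; [apply Un_cv_const|apply CV_plus; auto]. Qed.

Lemma Un_cv_expect {A} (d : Defs.dist A) (f : nat -> A -> R) h :
  (forall o, Un_cv (fun N => f N o) (h o)) -> Un_cv (fun N => expect d (f N)) (expect d h).
Proof.
  intro H. apply Un_cv_sumR_map. intros [o p]. apply Un_cv_scale. auto.
Qed.

Lemma pow_half_pos k : 0 < (/2)^k.
Proof. apply pow_lt; lra. Qed.

Lemma pow_half_le1 k : (/2)^k <= 1.
Proof.
  induction k as [|k IH]; simpl; [lra|]. pose proof (pow_half_pos k). lra.
Qed.

(** * The settling process *)

(* [tgeom T F] is E[F (min G T)] for G geometric, Pr[G = j] = 2^-(j+1): the
   number of swaps made by an instruction that is allowed to pass T predecessors. *)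
Definition tgeom (T : nat) (F : nat -> R) : R :=
  sumR (map (fun j => (/2)^(S j) * F j) (seq 0 T)) + (/2)^T * F T.

Lemma tgeom0 F : tgeom 0 F = F 0%nat.
Proof. unfold tgeom; simpl; ring. Qed.

Lemma tgeom_const T c : tgeom T (fun _ => c) = c.
Proof.
  unfold tgeom. rewrite (sumR_map_ext_in _ (fun j => c * (/2)^(S j))) by (intros; ring).
  rewrite sumR_map_scale, sum_geom_half. ring.
Qed.

Lemma tgeom_ext T F G : (forall j, (j <= T)%nat -> F j = G j) -> tgeom T F = tgeom T G.
Proof.
  intro H. unfold tgeom. rewrite H by lia. f_equal.
  apply sumR_map_ext_in. intros j Hj. apply in_seq in Hj. rewrite H by lia. auto.
Qed.

Lemma tgeom_S T F : tgeom (S T) F = /2 * F 0%nat + /2 * tgeom T (fun j => F (S j)).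
Proof.
  unfold tgeom. rewrite sumR_seq_shift.
  rewrite (sumR_map_ext_in _ (fun j => /2 * ((/2)^(S j) * F (S j)))) by (intros; simpl; ring).
  rewrite sumR_map_scale. simpl. ring.
Qed.

Lemma tgeom_sub_S T F : tgeom T F - tgeom (S T) F = (/2)^(S T) * (F T - F (S T)).
Proof. unfold tgeom. rewrite sumR_seq_S. simpl. lra. Qed.

Lemma tgeom_plus T F G : tgeom T (fun j => F j + G j) = tgeom T F + tgeom T G.
Proof.
  unfold tgeom.
  rewrite (sumR_map_ext_in _ (fun j => (/2)^(S j) * F j + (/2)^(S j) * G j)) by (intros; ring).
  rewrite sumR_map_plus. ring.
Qed.

Lemma tgeom_scale T c F : tgeom T (fun j => c * F j) = c * tgeom T F.
Proof.
  unfold tgeom.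
  rewrite (sumR_map_ext_in _ (fun j => c * ((/2)^(S j) * F j))) by (intros; ring).
  rewrite sumR_map_scale. ring.
Qed.

Lemma tgeom_sumR {A} T (H : A -> nat -> R) (l : list A) :
  sumR (map (fun p => tgeom T (H p)) l) = tgeom T (fun j => sumR (map (fun p => H p j) l)).
Proof.
  induction l as [|a l IH]; simpl.
  - rewrite tgeom_const. reflexivity.
  - rewrite IH, <- tgeom_plus. reflexivity.
Qed.

Fixpoint prefix_len (P : nat -> bool) (l : list nat) : nat :=
  match l with [] => 0%nat | y :: ys => if P y then S (prefix_len P ys) else 0%nat end.

(* The order produced when [x] passes the [j] last placed instructions; [pre] is the
   placed prefix in reverse and [aft] the instructions [x] has already passed. *)
Definition insert_back (pre aft : list nat) (x j : nat) : list nat :=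
  rev (skipn j pre) ++ x :: rev (firstn j pre) ++ aft.

Lemma expect_sink model prog m x pre aft F :
  expect (sink model prog m x pre aft) F =
  tgeom (prefix_len (fun y => can_swap model prog m y x) pre)
        (fun j => F (insert_back pre aft x j)).
Proof.
  revert aft; induction pre as [|y ys IH]; intro aft.
  - unfold tgeom, expect, insert_back; simpl. lra.
  - simpl sink. simpl prefix_len. destruct (can_swap model prog m y x).
    + unfold expect at 1; simpl map; simpl sumR.
      fold (expect (map (fun '(o, q) => (o, / 2 * q)) (sink model prog m x ys (y :: aft))) F).
      rewrite expect_scale_weights, IH, tgeom_S. f_equal. f_equal.
      apply tgeom_ext. intros j _. unfold insert_back. simpl. rewrite <- app_assoc. reflexivity.
    + unfold expect, tgeom, insert_back; simpl. lra.
Qed.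

Lemma expect_round model prog m d x f :
  expect (round model prog m d x) f =
  expect d (fun o => expect (sink model prog m x (rev o) []) f).
Proof.
  induction d as [|[o p] d IH]; [reflexivity|].
  unfold round in *. simpl flat_map. rewrite expect_app, IH.
  unfold expect at 1.
  fold (expect (map (fun '(o', q) => (o', p * q)) (sink model prog m x (rev o) [])) f).
  rewrite expect_scale_weights. reflexivity.
Qed.

Fixpoint expect_rounds model prog m (l : list nat) (g : list nat -> R) (o : list nat) : R :=
  match l with
  | [] => g o
  | x :: l' => expect (sink model prog m x (rev o) []) (expect_rounds model prog m l' g)
  end.

Lemma expect_fold_rounds model prog m l d g :
  expect (fold_left (round model prog m) l d) g = expect d (expect_rounds model prog m l g).
Proof.
  revert d; induction l as [|x l IH]; intro d; simpl; [reflexivity|].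
  rewrite IH, expect_round. reflexivity.
Qed.

Lemma expect_settle model prog m g :
  expect (settle model prog m) g = expect_rounds model prog m (seq 0 (m + 2)) g [].
Proof. unfold settle. rewrite expect_fold_rounds. unfold expect; simpl. lra. Qed.

Lemma mass_settle model prog m : expect (settle model prog m) (fun _ => 1) = 1.
Proof.
  rewrite expect_settle. generalize (@nil nat).
  induction (seq 0 (m + 2)) as [|x l IH]; intro o; simpl; [auto|].
  rewrite (expect_ext _ _ (fun _ => 1)) by auto. rewrite expect_sink. apply tgeom_const.
Qed.

(** * The random shifts *)

Definition grid (f : nat -> nat -> R) N :=
  sumR (map (fun s1 => sumR (map (fun s2 => f s1 s2) (seq 0 N))) (seq 0 N)).

Lemma grid_S f N : grid f (S N) = grid f N + sumR (map (fun s1 => f s1 N) (seq 0 N))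
   + sumR (map (fun s2 => f N s2) (seq 0 (S N))).
Proof.
  unfold grid. rewrite sumR_seq_S.
  rewrite (sumR_map_ext_in (fun s1 => sumR (map (fun s2 => f s1 s2) (seq 0 (S N))))
     (fun s1 => sumR (map (fun s2 => f s1 s2) (seq 0 N)) + f s1 N))
    by (intros; apply sumR_seq_S).
  rewrite sumR_map_plus. lra.
Qed.

Definition precede_trunc a N :=
  grid (fun s1 s2 => shift_prob s1 * shift_prob s2 * indic (Nat.ltb (s1 + a) s2)) N.

Lemma disjoint_trunc_split N a b :
  grid (fun s1 s2 => shift_prob s1 * shift_prob s2 * indic (disjointb s1 a s2 b)) N
  = precede_trunc a N + precede_trunc b N.
Proof.
  unfold precede_trunc, grid.
  rewrite (sumR_swap (fun s1 s2 => shift_prob s1 * shift_prob s2 * indic (Nat.ltb (s1 + b) s2))).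
  rewrite <- sumR_map_plus. apply sumR_map_ext_in. intros s1 _.
  rewrite <- sumR_map_plus. apply sumR_map_ext_in. intros s2 _.
  unfold disjointb.
  destruct (Nat.ltb (s1 + a) s2) eqn:E1, (Nat.ltb (s2 + b) s1) eqn:E2; simpl; try ring.
  apply Nat.ltb_lt in E1; apply Nat.ltb_lt in E2; lia.
Qed.

Definition precede_row a N := sumR (map (fun s1 => (/2)^(S s1) * indic (Nat.ltb (s1 + a) N)) (seq 0 N)).

Lemma precede_row_lt a N : (N < a)%nat -> precede_row a N = 0.
Proof.
  intro H. unfold precede_row. rewrite (sumR_map_ext_in _ (fun _ => 0)).
  - rewrite sumR_map_const; lra.
  - intros x Hx. apply in_seq in Hx. rewrite (proj2 (Nat.ltb_ge _ _)) by lia. simpl. ring.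
Qed.

Lemma precede_row_ge a N : (a <= N)%nat -> precede_row a N = 1 - (/2)^(N - a).
Proof.
  intro H. unfold precede_row.
  replace (seq 0 N) with (seq 0 (N - a) ++ seq (0 + (N - a)) a) by (rewrite <- seq_app; f_equal; lia).
  rewrite map_app, sumR_app.
  rewrite (sumR_map_ext_in _ (fun j => (/2)^(S j))).
  2:{ intros x Hx. apply in_seq in Hx. rewrite (proj2 (Nat.ltb_lt _ _)) by lia. simpl. ring. }
  rewrite (sumR_map_ext_in (fun s1 => (/2)^(S s1) * indic (Nat.ltb (s1 + a) N)) (fun _ => 0)).
  2:{ intros x Hx. apply in_seq in Hx. rewrite (proj2 (Nat.ltb_ge _ _)) by lia. simpl. ring. }
  rewrite sum_geom_half, sumR_map_const. lra.
Qed.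

Lemma precede_trunc_S a N : precede_trunc a (S N) = precede_trunc a N + (/2)^(S N) * precede_row a N.
Proof.
  unfold precede_trunc. rewrite grid_S.
  rewrite (sumR_map_ext_in (fun s2 => shift_prob N * shift_prob s2 * indic (Nat.ltb (N + a) s2)) (fun _ => 0)).
  2:{ intros x Hx. apply in_seq in Hx. rewrite (proj2 (Nat.ltb_ge _ _)) by lia. simpl. ring. }
  rewrite sumR_map_const. unfold precede_row. rewrite <- sumR_map_scale.
  rewrite (sumR_map_ext_in (fun s1 => shift_prob s1 * shift_prob N * indic (Nat.ltb (s1 + a) N))
     (fun s1 => (/2)^(S N) * ((/2)^(S s1) * indic (Nat.ltb (s1 + a) N))))
    by (intros; unfold shift_prob; ring).
  lra.
Qed.

Lemma precede_trunc_closed a N : (a <= N)%nat ->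
  precede_trunc a N = (/2)^a / 3 - (/2)^N + 2/3 * (/2)^N * (/2)^(N - a).
Proof.
  assert (Hsmall : forall n, (n <= a)%nat -> precede_trunc a n = 0).
  { intro n; induction n as [|n IH]; intro H; [reflexivity|].
    rewrite precede_trunc_S, IH, precede_row_lt by lia. lra. }
  induction N as [|N IH]; intro H.
  - assert (a = 0%nat) by lia. subst. unfold precede_trunc, grid. simpl. lra.
  - rewrite precede_trunc_S. destruct (Nat.eq_dec a (S N)) as [->|Hne].
    + rewrite Hsmall, precede_row_lt by lia. rewrite Nat.sub_diag. simpl. lra.
    + rewrite IH, precede_row_ge by lia.
      replace (S N - a)%nat with (S (N - a)) by lia. simpl. lra.
Qed.

Lemma Un_cv_precede_trunc a : Un_cv (precede_trunc a) ((/2)^a / 3).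
Proof.
  apply (CV_shift _ a).
  apply (Un_cv_ext (fun N => (/2)^a / 3 - (/2)^(N + a) + 2/3 * (/2)^(N + a) * (/2)^N)).
  { intro N. rewrite precede_trunc_closed by lia. repeat f_equal. lia. }
  assert (Hp : Un_cv (fun N => (/2)^(N + a)) 0).
  { apply (CV_shift' (fun n => (/2)^n)). apply Un_cv_pow. rewrite Rabs_pos_eq; lra. }
  assert (Hq : Un_cv (fun N => (/2)^N) 0) by (apply Un_cv_pow; rewrite Rabs_pos_eq; lra).
  pose proof (CV_plus _ _ _ _ (CV_minus _ _ _ _ (Un_cv_const ((/2)^a / 3)) Hp)
                (CV_mult _ _ _ _ (Un_cv_scale _ _ (2/3) Hp) Hq)) as Hlim.
  replace ((/2)^a / 3 - 0 + 2/3 * 0 * 0) with ((/2)^a / 3) in Hlim by ring. exact Hlim.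
Qed.

Definition avg_progs (m : nat) (f : list bool -> R) : R :=
  sumR (map (fun prog => (/2)^m * f prog) (all_progs m)).

Lemma avg_progs_ext m f g : (forall p, f p = g p) -> avg_progs m f = avg_progs m g.
Proof. intro H. apply sumR_map_ext_in. intros p _. rewrite H. auto. Qed.

Lemma avg_progs_S m f :
  avg_progs (S m) f =
  /2 * avg_progs m (fun p => f (true :: p)) + /2 * avg_progs m (fun p => f (false :: p)).
Proof.
  unfold avg_progs. simpl all_progs. rewrite sumR_flat_map, <- !sumR_map_scale, <- sumR_map_plus.
  apply sumR_map_ext_in. intros p _. simpl. ring.
Qed.

Lemma avg_progs_const m c : avg_progs m (fun _ => c) = c.
Proof.
  induction m as [|m IH]; [unfold avg_progs; simpl; ring|].
  rewrite avg_progs_S. cbv beta. rewrite IH. lra.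
Qed.

Definition pow_half_Gamma (m : nat) (o : list nat) : R := (/2)^(Gamma m o).

Definition PrA_value (model : memory_model) (m : nat) : R :=
  avg_progs m (fun prog => 2/3 * expect (settle model prog m) (pow_half_Gamma m)).

Lemma PrA_value_spec model m : PrA model m (PrA_value model m).
Proof.
  unfold PrA, PrA_value, avg_progs.
  apply (Un_cv_ext (fun N => sumR (map (fun prog => (/2)^m * expect (settle model prog m)
     (fun o1 => expect (settle model prog m) (fun o2 =>
        precede_trunc (Gamma m o1) N + precede_trunc (Gamma m o2) N))) (all_progs m)))).
  { intro N. unfold PrA_trunc. apply sumR_map_ext_in. intros prog _. f_equal.
    unfold expect. apply sumR_map_ext_in. intros [o1 p1] _.
    rewrite <- sumR_map_scale. apply sumR_map_ext_in. intros [o2 p2] _.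
    rewrite <- disjoint_trunc_split. unfold grid. ring. }
  apply Un_cv_sumR_map. intro prog. apply Un_cv_scale.
  rewrite <- (expect_pair_avg _ _ (mass_settle model prog m)).
  apply Un_cv_expect. intro o1. apply Un_cv_expect. intro o2.
  unfold pow_half_Gamma. rewrite Rdiv_plus_distr.
  apply CV_plus; apply Un_cv_precede_trunc.
Qed.

(** * Orders produced by the settling process *)

Lemma prefix_len_all P l : (forall y, P y = true) -> prefix_len P l = length l.
Proof. intro H; induction l; simpl; [|rewrite H, IHl]; auto. Qed.

Lemma prefix_len_none P l : (forall y, P y = false) -> prefix_len P l = 0%nat.
Proof. intro H; destruct l; simpl; [|rewrite H]; auto. Qed.

Lemma prefix_len_ext P Q l : (forall y, P y = Q y) -> prefix_len P l = prefix_len Q l.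
Proof. intro H; induction l; simpl; [|rewrite H, IHl]; auto. Qed.

Lemma prefix_len_le P l : (prefix_len P l <= length l)%nat.
Proof. induction l; simpl; [|destruct (P a); simpl]; lia. Qed.

Lemma prefix_len_firstn P l j :
  (j <= prefix_len P l)%nat -> forall y, In y (firstn j l) -> P y = true.
Proof.
  revert j; induction l as [|a l IH]; intros j Hj y Hy; destruct j; try contradiction.
  simpl in Hj, Hy. destruct (P a) eqn:Pa; [|lia].
  destruct Hy as [<-|Hy]; [auto|]. apply (IH j); [lia|auto].
Qed.

Lemma prefix_len_app P l1 x l2 :
  (forall y, In y l1 -> P y = true) -> P x = false -> prefix_len P (l1 ++ x :: l2) = length l1.
Proof.
  intros H Hx; induction l1 as [|a l1 IH]; simpl.
  - rewrite Hx; auto.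
  - rewrite H by (left; auto). rewrite IH; auto. intros; apply H; right; auto.
Qed.

Lemma in_firstn_in {A} (y : A) n l : In y (firstn n l) -> In y l.
Proof. intro H; rewrite <- (firstn_skipn n l); apply in_app_iff; auto. Qed.

Lemma in_skipn_in {A} (y : A) n l : In y (skipn n l) -> In y l.
Proof. intro H; rewrite <- (firstn_skipn n l); apply in_app_iff; auto. Qed.

Lemma insert_back0 pre x : insert_back pre [] x 0 = rev pre ++ [x].
Proof. reflexivity. Qed.

Lemma rev_insert_back pre x j : rev (insert_back pre [] x j) = firstn j pre ++ x :: skipn j pre.
Proof.
  unfold insert_back. rewrite app_nil_r, rev_app_distr. simpl.
  rewrite !rev_involutive, <- app_assoc. reflexivity.
Qed.

Lemma in_insert_back pre x j y : In y (insert_back pre [] x j) -> y = x \/ In y pre.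
Proof.
  rewrite in_rev, rev_insert_back, in_app_iff. intros [H|[H|H]].
  - right; eapply in_firstn_in; eauto.
  - left; auto.
  - right; eapply in_skipn_in; eauto.
Qed.

Lemma length_insert_back pre x j : length (insert_back pre [] x j) = S (length pre).
Proof.
  rewrite <- length_rev, rev_insert_back, length_app. simpl.
  rewrite <- (firstn_skipn j pre) at 3. rewrite length_app. lia.
Qed.

Lemma pos_app x l1 l2 : ~ In x l1 -> Defs.pos x (l1 ++ x :: l2) = length l1.
Proof.
  induction l1 as [|a l1 IH]; intro H; simpl.
  - rewrite Nat.eqb_refl; auto.
  - destruct (Nat.eqb_spec a x) as [->|]; [exfalso; apply H; left; auto|].
    rewrite IH; auto. intro; apply H; right; auto.
Qed.

Lemma Gamma_split m A C D :
  ~ In m A -> ~ In (S m) A -> ~ In (S m) C ->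
  Gamma m (A ++ m :: C ++ S m :: D) = (length C + 2)%nat.
Proof.
  intros H1 H2 H3. unfold Gamma, gamma.
  rewrite pos_app by auto.
  replace (A ++ m :: C ++ S m :: D) with ((A ++ m :: C) ++ S m :: D) by (rewrite <- app_assoc; auto).
  rewrite pos_app.
  - rewrite length_app; simpl. lia.
  - rewrite in_app_iff. intros [H|[H|H]]; auto. lia.
Qed.

Lemma typ_lt prog m r : (r < m)%nat -> typ prog m r = nth r prog false.
Proof. intro H; unfold typ. rewrite (proj2 (Nat.ltb_lt r m) H). auto. Qed.

Lemma typ_load prog m : typ prog m m = false.
Proof. unfold typ. rewrite Nat.ltb_irrefl, Nat.eqb_refl. auto. Qed.

Lemma typ_store prog m : typ prog m (S m) = true.
Proof.
  unfold typ. rewrite (proj2 (Nat.ltb_ge (S m) m)), (proj2 (Nat.eqb_neq (S m) m)) by lia. auto.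
Qed.

Lemma expect_rounds_app model prog m l1 l2 g o :
  expect_rounds model prog m (l1 ++ l2) g o =
  expect_rounds model prog m l1 (expect_rounds model prog m l2 g) o.
Proof.
  revert o; induction l1 as [|x l1 IH]; intro o; simpl; [auto|].
  apply expect_ext. apply IH.
Qed.

Definition below (r : nat) (o : list nat) : Prop := forall y, In y o -> (y < r)%nat.

Lemma below_insert_back r o j : below r o -> below (S r) (insert_back (rev o) [] r j).
Proof.
  intros Ho y Hy. apply in_insert_back in Hy as [->|Hy]; [lia|].
  apply in_rev in Hy. specialize (Ho _ Hy). lia.
Qed.

Lemma expect_settle_split model prog m g :
  expect (settle model prog m) g =
  expect_rounds model prog m (seq 0 m)
    (expect_rounds model prog m [m; S m] g) [].
Proof.
  rewrite expect_settle, <- expect_rounds_app, seq_app. reflexivity.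
Qed.

(* The rounds before the critical pair only permute the placed instructions. *)
Lemma expect_rounds_perm_invariant model prog m r k h c o :
  length o = r -> below r o ->
  (forall o', length o' = (r + k)%nat -> below (r + k) o' -> h o' = c) ->
  expect_rounds model prog m (seq r k) h o = c.
Proof.
  revert r o; induction k as [|k IH]; intros r o Hl Ho Hh; simpl.
  - apply Hh; rewrite ?Nat.add_0_r; auto.
  - rewrite expect_sink. erewrite tgeom_ext; [apply tgeom_const|]. intros j _. apply IH.
    + rewrite length_insert_back, length_rev. auto.
    + apply below_insert_back; auto.
    + intros o' Hl' Ho'. apply Hh; rewrite Nat.add_succ_r in *; auto.
Qed.

Lemma PrA_value_last_rounds model m c :
  (forall prog o, length o = m -> below m o ->
     expect_rounds model prog m [m; S m] (pow_half_Gamma m) o = c) ->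
  PrA_value model m = 2/3 * c.
Proof.
  intro Hlast. unfold PrA_value. rewrite <- (avg_progs_const m (2/3 * c)).
  apply avg_progs_ext. intro prog. rewrite expect_settle_split.
  rewrite (expect_rounds_perm_invariant _ _ _ 0 m _ c); auto. intros y [].
Qed.

(** * Sequential consistency *)

Lemma last_rounds_SC prog m o : below m o ->
  expect_rounds SC prog m [m; S m] (pow_half_Gamma m) o = /4.
Proof.
  intro Ho. simpl.
  rewrite expect_sink, prefix_len_none, tgeom0, insert_back0, rev_involutive by reflexivity.
  rewrite expect_sink, prefix_len_none, tgeom0, insert_back0, rev_involutive by reflexivity.
  unfold pow_half_Gamma. rewrite <- app_assoc. change ([m] ++ [S m]) with (m :: [] ++ S m :: []).
  rewrite (Gamma_split m o []); [simpl; lra| | |simpl; auto];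
    intro H; apply Ho in H; lia.
Qed.

Lemma PrA_value_SC m : PrA_value SC m = 1/6.
Proof.
  rewrite (PrA_value_last_rounds _ _ (/4)); [lra|].
  intros; apply last_rounds_SC; auto.
Qed.

(** * Weak ordering *)

(* The critical load passes [j] of the [m] earlier instructions and the critical
   store then passes [i <= j] of them, leaving [j - i] in between. *)
Definition wo_value (m : nat) : R := tgeom m (fun j => tgeom j (fun i => (/2)^(j - i + 2))).

Lemma last_rounds_WO prog m o : length o = m -> below m o ->
  expect_rounds WO prog m [m; S m] (pow_half_Gamma m) o = wo_value m.
Proof.
  intros Hl Ho. simpl. rewrite expect_sink.
  rewrite prefix_len_all, length_rev, Hl.
  2:{ intro y. unfold can_swap, WO. rewrite (proj2 (Nat.eqb_neq m (S m))) by lia. auto. }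
  apply tgeom_ext. intros j Hj.
  rewrite expect_sink, rev_insert_back.
  set (ro := rev o).
  assert (Hro : below m ro) by (intros y Hy; apply Ho, in_rev; auto).
  assert (Hfirst : length (firstn j ro) = j) by (rewrite length_firstn; unfold ro; rewrite length_rev; lia).
  rewrite prefix_len_app, Hfirst.
  2:{ intros y Hy. apply in_firstn_in, Hro in Hy. unfold can_swap, WO.
      rewrite Nat.eqb_refl, (proj2 (Nat.eqb_neq y m)) by lia. auto. }
  2:{ unfold can_swap, WO. rewrite !Nat.eqb_refl. auto. }
  apply tgeom_ext. intros i Hi.
  unfold insert_back. rewrite skipn_app, firstn_app, Hfirst.
  replace (i - j)%nat with 0%nat by lia. simpl skipn. simpl firstn. rewrite !app_nil_r.
  rewrite rev_app_distr. simpl rev at 1. rewrite <- !app_assoc. simpl app.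
  unfold pow_half_Gamma. rewrite Gamma_split.
  - rewrite length_rev, length_skipn, Hfirst. reflexivity.
  - rewrite <- in_rev. intro H. apply in_skipn_in, Hro in H. lia.
  - rewrite <- in_rev. intro H. apply in_skipn_in, Hro in H. lia.
  - rewrite <- in_rev. intro H. apply in_skipn_in, in_firstn_in, Hro in H. lia.
Qed.

Lemma wo_value_closed m : wo_value m = 7/36 + ((/2)^m * (/2)^m) * (INR m / 24 + 1/18).
Proof.
  unfold wo_value.
  rewrite (tgeom_ext m _ (fun j => INR j * (/2)^(j + 3) + (/2)^(j + 2))).
  2:{ intros j _. unfold tgeom. rewrite Nat.sub_diag.
      rewrite (sumR_map_ext_in _ (fun _ => (/2)^(j + 3))).
      - rewrite sumR_map_const, length_seq, <- pow_add. simpl plus. ring.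
      - intros i Hi. apply in_seq in Hi. rewrite <- pow_add. f_equal. lia. }
  assert (Hsum : forall n, sumR (map (fun j => (/2)^(S j) * (INR j * (/2)^(j + 3) + (/2)^(j + 2))) (seq 0 n))
      = 7/36 - (INR n / 12 + 7/36) * ((/2)^n * (/2)^n)).
  { induction n as [|n IH]; [simpl; lra|]. rewrite sumR_seq_S, IH, S_INR, !pow_add. simpl. field. }
  unfold tgeom. rewrite Hsum, !pow_add. simpl. field.
Qed.

Lemma INR_mul_pow_half_le1 m : INR m * (/2)^m <= 1.
Proof.
  induction m as [|m IH]; [simpl; lra|]. rewrite S_INR. simpl pow.
  pose proof (pow_half_le1 m). pose proof (pow_half_pos m). nra.
Qed.

Lemma Un_cv_wo_value : Un_cv wo_value (7/36).
Proof.
  intros eps He.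
  destruct (Un_cv_pow (/2) ltac:(rewrite Rabs_pos_eq; lra) eps He) as [N HN].
  exists N. intros n Hn. specialize (HN n Hn). unfold Rdist in *.
  rewrite Rminus_0_r, Rabs_pos_eq in HN by (apply Rlt_le, pow_half_pos).
  rewrite wo_value_closed.
  pose proof (INR_mul_pow_half_le1 n). pose proof (pow_half_le1 n). pose proof (pow_half_pos n).
  pose proof (pos_INR n).
  set (q := (/2)^n) in *.
  replace (7/36 + q * q * (INR n / 24 + 1/18) - 7/36) with (q * q * (INR n / 24 + 1/18)) by ring.
  rewrite Rabs_pos_eq by nra. nra.
Qed.

Lemma PrA_value_WO m : PrA_value WO m = 2/3 * wo_value m.
Proof. apply PrA_value_last_rounds. intros; apply last_rounds_WO; auto. Qed.

(** * Total store order *)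

Lemma can_swap_TSO_store prog m y x :
  typ prog m x = true -> can_swap TSO prog m y x = false.
Proof. intro Hx. unfold can_swap, TSO. rewrite Hx, andb_false_r. auto. Qed.

Lemma can_swap_TSO_load prog m y x :
  typ prog m x = false -> x <> S m -> can_swap TSO prog m y x = typ prog m y.
Proof.
  intros Hx Hxm. unfold can_swap, TSO. rewrite Hx, (proj2 (Nat.eqb_neq x (S m)) Hxm).
  simpl. rewrite !andb_true_r. auto.
Qed.

(* Under TSO the rest of the process sees the placed prefix only through its
   trailing stores, which are exactly the instructions a later load may pass. *)
Definition trailing_stores prog m (o : list nat) : nat := prefix_len (typ prog m) (rev o).

Lemma trailing_stores_load prog m o x j :
  typ prog m x = false -> (j <= trailing_stores prog m o)%nat ->
  trailing_stores prog m (insert_back (rev o) [] x j) = j.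
Proof.
  intros Hx Hj. unfold trailing_stores in *. rewrite rev_insert_back, prefix_len_app, length_firstn.
  - pose proof (prefix_len_le (typ prog m) (rev o)). lia.
  - apply prefix_len_firstn; auto.
  - auto.
Qed.

Definition tso_final (t : nat) : R := tgeom t (fun j => (/2)^(j + 2)).

Lemma last_rounds_TSO prog m o : below m o ->
  expect_rounds TSO prog m [m; S m] (pow_half_Gamma m) o = tso_final (trailing_stores prog m o).
Proof.
  intro Ho. simpl. rewrite expect_sink.
  rewrite (prefix_len_ext _ (typ prog m)) by (intro; apply can_swap_TSO_load; [apply typ_load|lia]).
  apply tgeom_ext. intros j Hj.
  rewrite expect_sink, prefix_len_none, tgeom0, insert_back0, rev_involutive
    by (intro; apply can_swap_TSO_store, typ_store).
  set (ro := rev o).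
  assert (Hro : below m ro) by (intros y Hy; apply Ho, in_rev; auto).
  unfold insert_back. rewrite app_nil_r, <- app_assoc. simpl.
  unfold pow_half_Gamma. rewrite Gamma_split.
  - rewrite length_rev, length_firstn. unfold trailing_stores in Hj. fold ro in Hj.
    pose proof (prefix_len_le (typ prog m) ro). f_equal. lia.
  - rewrite <- in_rev. intro H. apply in_skipn_in, Hro in H. lia.
  - rewrite <- in_rev. intro H. apply in_skipn_in, Hro in H. lia.
  - rewrite <- in_rev. intro H. apply in_firstn_in, Hro in H. lia.
Qed.

(* Expected 2^-Γ when the rounds of x_{r+1} .. x_{r+k} and of the critical pair
   remain, [t] being the current number of trailing stores. *)
Fixpoint tso_value (prog : list bool) (r k t : nat) : R :=
  match k with
  | O => tso_final t
  | S k' => if nth r prog false then tso_value prog (S r) k' (S t)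
            else tgeom t (tso_value prog (S r) k')
  end.

Lemma rounds_TSO prog m k : forall r o, (r + k = m)%nat -> below r o ->
  expect_rounds TSO prog m (seq r k) (expect_rounds TSO prog m [m; S m] (pow_half_Gamma m)) o
  = tso_value prog r k (trailing_stores prog m o).
Proof.
  induction k as [|k IH]; intros r o Hr Ho.
  { rewrite Nat.add_0_r in Hr. subst. apply last_rounds_TSO; auto. }
  assert (Htyp : typ prog m r = nth r prog false) by (apply typ_lt; lia).
  simpl. rewrite expect_sink.
  destruct (nth r prog false) eqn:Hb.
  - rewrite prefix_len_none, tgeom0 by (intro; apply can_swap_TSO_store; congruence).
    rewrite IH by (auto using below_insert_back; lia). f_equal.
    unfold trailing_stores. rewrite rev_insert_back. simpl. rewrite Htyp. reflexivity.
  - rewrite (prefix_len_ext _ (typ prog m)) by (intro; apply can_swap_TSO_load; [congruence|lia]).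
    apply tgeom_ext. intros j Hj.
    rewrite IH by (auto using below_insert_back; lia). f_equal.
    apply trailing_stores_load; [congruence|auto].
Qed.

Lemma PrA_value_TSO m : PrA_value TSO m = 2/3 * avg_progs m (fun prog => tso_value prog 0 m 0).
Proof.
  unfold PrA_value. rewrite (avg_progs_ext m _ (fun prog => 2/3 * tso_value prog 0 m 0)).
  - unfold avg_progs. rewrite <- sumR_map_scale. apply sumR_map_ext_in. intros; ring.
  - intro prog. rewrite expect_settle_split, rounds_TSO; auto. intros y [].
Qed.

Definition tso_step (h : nat -> R) (t : nat) : R := /2 * h (S t) + /2 * tgeom t h.

Definition tso_avg (m : nat) : nat -> R := Nat.iter m tso_step tso_final.

Lemma tso_value_cons b p r k t : tso_value (b :: p) (S r) k t = tso_value p r k t.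
Proof.
  revert r t; induction k as [|k IH]; intros r t; simpl; [auto|].
  destruct (nth r p false); [apply IH|]. apply tgeom_ext. intros; apply IH.
Qed.

Lemma avg_progs_tgeom m T (H : list bool -> nat -> R) :
  avg_progs m (fun p => tgeom T (H p)) = tgeom T (fun j => avg_progs m (fun p => H p j)).
Proof.
  unfold avg_progs. rewrite <- tgeom_sumR. apply sumR_map_ext_in. intros p _.
  rewrite <- tgeom_scale. reflexivity.
Qed.

(* Averaging over the type of the first instruction gives the recursion [tso_step]. *)
Lemma avg_tso_value m t : avg_progs m (fun p => tso_value p 0 m t) = tso_avg m t.
Proof.
  revert t; induction m as [|m IH]; intro t.
  - unfold avg_progs. simpl. ring.
  - rewrite avg_progs_S. simpl tso_value. unfold tso_avg. rewrite Nat.iter_succ. fold (tso_avg m).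
    unfold tso_step. rewrite avg_progs_tgeom, <- IH.
    f_equal; f_equal; [apply avg_progs_ext; intro; apply tso_value_cons|].
    apply tgeom_ext. intros j _. rewrite <- IH. apply avg_progs_ext. intro; apply tso_value_cons.
Qed.

Lemma tso_step_sub_S h t :
  tso_step h t - tso_step h (S t) =
  /2 * (h (S t) - h (S (S t))) + /2 * ((/2)^(S t) * (h t - h (S t))).
Proof. unfold tso_step. pose proof (tgeom_sub_S t h). lra. Qed.

(* The differences of [tso_avg m] contract by the factor 1/4 + 1/8 at each step. *)
Lemma tso_avg_sub_S m t :
  0 <= tso_avg m t - tso_avg m (S t) <= (3/8)^m * ((/2)^t * (/2)^t) / 16.
Proof.
  revert t; induction m as [|m IH]; intro t.
  - unfold tso_avg, tso_final. simpl Nat.iter. rewrite tgeom_sub_S, !pow_add. simpl.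
    pose proof (pow_half_pos t). split; nra.
  - unfold tso_avg. rewrite !Nat.iter_succ. fold (tso_avg m). rewrite tso_step_sub_S.
    destruct (IH t) as [A1 A2], (IH (S t)) as [B1 B2].
    simpl pow in *. pose proof (pow_half_pos t). pose proof (pow_half_le1 t).
    set (x := (/2)^t) in *. set (c := (3/8)^m) in *.
    assert (0 < c) by (unfold c; apply pow_lt; lra).
    split; [nra|].
    assert (/2 * (/2 * x) * (tso_avg m t - tso_avg m (S t)) <= /2 * (/2 * x) * (c * (x * x) / 16))
      by (apply Rmult_le_compat_l; nra).
    nra.
Qed.

Lemma tso_avg_succ_0 m : tso_avg m 0 - tso_avg (S m) 0 = /2 * (tso_avg m 0 - tso_avg m 1).
Proof.
  unfold tso_avg at 2. rewrite Nat.iter_succ. fold (tso_avg m). unfold tso_step. rewrite tgeom0. lra.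
Qed.

Lemma tso_avg3 : tso_avg 3 0 = 13/64.
Proof. unfold tso_avg, tso_step, tso_final, tgeom. simpl. field. Qed.

Lemma Un_cv_tso_avg_bounds : exists L, Un_cv (fun m => tso_avg m 0) L /\
  tso_avg 3 0 - (3/8)^3 / 20 <= L <= tso_avg 3 0.
Proof.
  set (u := fun m => tso_avg m 0).
  set (v := fun m => u m - (3/8)^m / 20).
  assert (Hdec : Un_decreasing u).
  { intro n. unfold u. pose proof (tso_avg_succ_0 n). pose proof (tso_avg_sub_S n 0). lra. }
  assert (Hgrow : Un_growing v).
  { intro n. unfold v, u. pose proof (tso_avg_succ_0 n). pose proof (tso_avg_sub_S n 0).
    simpl pow in *. assert (0 < (3/8)^n) by (apply pow_lt; lra). nra. }
  assert (Hvu : forall n, v n <= u n).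
  { intro n. unfold v. assert (0 < (3/8)^n) by (apply pow_lt; lra). lra. }
  assert (Hlb : has_lb u).
  { exists (- v 0%nat). intros x [n ->]. unfold opp_seq.
    pose proof (growing_prop v n 0 Hgrow ltac:(lia)). pose proof (Hvu n). lra. }
  destruct (decreasing_cv u Hdec Hlb) as [L HL].
  assert (HvL : Un_cv v L).
  { replace L with (L - /20 * 0) by ring. apply CV_minus; [exact HL|].
    apply (Un_cv_ext (fun n => /20 * (3/8)^n)); [intro; unfold Rdiv; ring|].
    apply Un_cv_scale, Un_cv_pow. rewrite Rabs_pos_eq; lra. }
  exists L. split; [exact HL|]. split.
  - apply (growing_ineq v L Hgrow HvL 3).
  - apply (decreasing_ineq u L Hdec HL 3).
Qed.

Theorem theorem4 :
  (exists P : nat -> R, (forall m, (1 <= m)%nat -> PrA SC m (P m)) /\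
     Un_cv P (1/6)) /\
  (exists P : nat -> R, (forall m, (1 <= m)%nat -> PrA WO m (P m)) /\
     Un_cv P (7/54)) /\
  (exists P : nat -> R, (forall m, (1 <= m)%nat -> PrA TSO m (P m)) /\
     exists L : R, Un_cv P L /\ 58/441 < L < 58/441 + 1/189).
Proof.
  split; [|split].
  - exists (PrA_value SC). split; [intros; apply PrA_value_spec|].
    apply (Un_cv_ext (fun _ => 1/6)); [intro; symmetry; apply PrA_value_SC|apply Un_cv_const].
  - exists (PrA_value WO). split; [intros; apply PrA_value_spec|].
    apply (Un_cv_ext (fun m => 2/3 * wo_value m)); [intro; symmetry; apply PrA_value_WO|].
    replace (7/54) with (2/3 * (7/36)) by field. apply Un_cv_scale, Un_cv_wo_value.
  - exists (PrA_value TSO). split; [intros; apply PrA_value_spec|].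
    destruct Un_cv_tso_avg_bounds as (L & HL & Hlo & Hhi). exists (2/3 * L). split.
    + apply (Un_cv_ext (fun m => 2/3 * tso_avg m 0)).
      { intro m. rewrite PrA_value_TSO, avg_tso_value. reflexivity. }
      apply Un_cv_scale, HL.
    + rewrite tso_avg3 in Hlo, Hhi. simpl in Hlo. lra.
Qed.
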